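(* Let $X$ be a normed space and $Y$ a Banach space, and let $l\in\{-1,1\}$. Let $f:X\to Y$ be an odd mapping satisfying $\|D_f(x,y)\|\le\phi(x,y)$ for all $x,y\in X$, where $\phi:X\times X\to[0,\infty)$ is a function such that $$\sum_{i=1}^{\infty}2^{il}\phi\left(\frac{x}{2^{il}},\frac{x}{2^{il}}\right)<\infty\quad\text{and}\quad\sum_{i=1}^{\infty}8^{il}\phi\left(\frac{x}{2^{il}},\frac{x}{2^{il}}\right)<\infty$$ for all $x\in X$, and $\lim_{n\to\infty}2^{ln}\phi\left(\frac{x}{2^{ln}},\frac{y}{2^{ln}}\right)=0$ and $\lim_{n\to\infty}8^{ln}\phi\left(\frac{x}{2^{ln}},\frac{y}{2^{ln}}\right)=0$ for all $x,y\in X$. Then there exist a unique additive function $A:X\to Y$ and a unique cubic function $C:X\to Y$ such that $$\|f(x)-A(x)-C(x)\|\le\frac{1}{12}\sum_{i=\frac{|l-1|}{2}}^{\infty}\left(2^{il}+8^{il}\right)\phi\left(\frac{x}{2^{l(i+l)}},\frac{x}{2^{l(i+l)}}\right)$$ for all $x\in X$ (the summation starts at $i=0$ if $l=1$ and at $i=1$ if $l=-1$).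
   Context: For a mapping $f:X\to Y$ define $$D_f(x,y)=3f(x+3y)-f(3x+y)-12[f(x+y)+f(x-y)]+16[f(x)+f(y)]-12f(2y)+4f(2x)$$ for $x,y\in X$. A function $g:X\to Y$ is additive if $g(x+y)=g(x)+g(y)$ for all $x,y\in X$, and cubic if $g(x+2y)-3g(x+y)+3g(x)-g(x-y)=6g(y)$ for all $x,y\in X$. *)

From HB Require Import structures.
From mathcomp Require Import all_boot all_order all_algebra.
From mathcomp Require Import all_classical all_reals all_analysis.
Set Implicit Arguments. Unset Strict Implicit. Unset Printing Implicit Defensive.
Import Order.TTheory GRing.Theory Num.Theory.
Import numFieldNormedType.Exports.
Local Open Scope ring_scope.

Section Defs.
Variables (R : realType) (X : normedModType R) (Y : normedModType R).

Definition Dfun (f : X -> Y) (x y : X) : Y :=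
  (3 : R) *: f (x + (3 : R) *: y) - f ((3 : R) *: x + y)
  - (12 : R) *: (f (x + y) + f (x - y)) + (16 : R) *: (f x + f y)
  - (12 : R) *: f ((2 : R) *: y) + (4 : R) *: f ((2 : R) *: x).

Definition additive_fun (g : X -> Y) : Prop :=
  forall x y, g (x + y) = g x + g y.

Definition cubic_fun (g : X -> Y) : Prop :=
  forall x y, g (x + (2 : R) *: y) - (3 : R) *: g (x + y) + (3 : R) *: g x - g (x - y)
              = (6 : R) *: g y.

Definition odd_fun (g : X -> Y) : Prop := forall x, g (- x) = - g x.

End Defs.

(* For odd f, D_f(x,x) = 2 (g(2x) - 2 g(x)) = 2 (h(2x) - 8 h(x)) with
   g := f(2.) - 8 f and h := f(2.) - 2 f, so g is approximately 2-homogeneous and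
   h approximately 8-homogeneous.  Hyers' direct method, i.e. the limits of
   c^n G(x / t^n) with t = 2^l and c = t or t^3, turns them into odd solutions
   A0, C0 of D = 0 satisfying A0(2x) = 2 A0(x) and C0(2x) = 8 C0(x).  An odd
   solution F of D = 0 with F(2x) = k F(x) satisfies
   F(x+2y) - 3F(x+y) + 3F(x) - F(x-y) = (k-2) F(y), which is the cubic equation
   for k = 8 and forces additivity for k = 2.  As h - g = 6 f, the functions
   A := -A0/6 and C := C0/6 approximate f.  For uniqueness, an additive A' and a
   cubic C' obeying the same bound are fixed points of the same rescalings, and
   the rescaled error vanishes because it is dominated by tails of the bounding
   series. *)

From HB Require Import structures.
From mathcomp Require Import all_boot all_order all_algebra.
From mathcomp Require Import all_classical all_reals all_analysis.
From mathcomp Require Import ring lra.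

Set Implicit Arguments.
Unset Strict Implicit.
Unset Printing Implicit Defensive.
Import Order.TTheory GRing.Theory Num.Theory.
Import numFieldNormedType.Exports.
Local Open Scope classical_set_scope.
Local Open Scope ring_scope.

Section LinearExpressions.
Variables (R : realType) (V : lmodType R).

Inductive lexpr :=
  | LAtom of nat | LAdd of lexpr & lexpr | LOpp of lexpr | LScale of R & lexpr | LZero.

Fixpoint leval (env : nat -> V) (e : lexpr) : V :=
  match e with
  | LAtom n => env n
  | LAdd a b => leval env a + leval env b
  | LOpp a => - leval env a
  | LScale r a => r *: leval env a
  | LZero => 0
  end.

Fixpoint lcoef (e : lexpr) (j : nat) : R :=
  match e with
  | LAtom n => (n == j)%:R
  | LAdd a b => lcoef a j + lcoef b j
  | LOpp a => - lcoef a j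
  | LScale r a => r * lcoef a j
  | LZero => 0
  end.

Fixpoint latoms (e : lexpr) : nat :=
  match e with
  | LAtom n => n.+1
  | LAdd a b => maxn (latoms a) (latoms b)
  | LOpp a | LScale _ a => latoms a
  | LZero => 0
  end.

Lemma leval_coef env e N : (latoms e <= N)%N ->
  leval env e = \sum_(j < N) lcoef e j *: env j.
Proof.
elim: e => [n|a iha b ihb|a iha|r a iha|] /=.
- move=> nN; rewrite (bigD1 (Ordinal nN)) //= eqxx scale1r big1 ?addr0 // => j.
  by rewrite -val_eqE eq_sym => /negbTE /= ->; rewrite scale0r.
- rewrite geq_max => /andP[/iha-> /ihb->]; rewrite -big_split.
  by apply: eq_bigr => j _; rewrite scalerDl.
- by move=> /iha->; rewrite -sumrN; apply: eq_bigr => j _; rewrite scaleNr.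
- by move=> /iha->; rewrite scaler_sumr; apply: eq_bigr => j _; rewrite scalerA.
- by move=> _; rewrite big1 // => j _; rewrite scale0r.
Qed.

Lemma leval_eq env e1 e2 N : (latoms e1 <= N)%N -> (latoms e2 <= N)%N ->
  (forall j, (j < N)%N -> lcoef e1 j = lcoef e2 j) -> leval env e1 = leval env e2.
Proof.
move=> h1 h2 hc; rewrite (leval_coef env h1) (leval_coef env h2).
by apply: eq_bigr => j _; rewrite hc.
Qed.

End LinearExpressions.

Ltac lexpr_index t l :=
  match l with
  | cons ?u ?l' =>
    match tt with
    | _ => let _ := constr:(@erefl _ t : t = u) in constr:(0%N)
    | _ => let n := lexpr_index t l' in constr:(S n)
    end
  end.

Ltac lexpr_add_atom t l :=
  match tt with
  | _ => let _ := lexpr_index t l in l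
  | _ => constr:(cons t l)
  end.

Ltac lexpr_atoms t l :=
  lazymatch t with
  | (?a + ?b)%R => let l1 := lexpr_atoms a l in lexpr_atoms b l1
  | (- ?a)%R => lexpr_atoms a l
  | (_ *: ?a)%R => lexpr_atoms a l
  | 0%R => l
  | _ => lexpr_add_atom t l
  end.

Ltac lexpr_reify R t l :=
  lazymatch t with
  | (?a + ?b)%R =>
    let ea := lexpr_reify R a l in let eb := lexpr_reify R b l in constr:(@LAdd R ea eb)
  | (- ?a)%R => let ea := lexpr_reify R a l in constr:(@LOpp R ea)
  | (?r *: ?a)%R => let ea := lexpr_reify R a l in constr:(@LScale R r ea)
  | 0%R => constr:(@LZero R)
  | _ => let n := lexpr_index t l in constr:(@LAtom R n)
  end.

(* Proves an equation between R-linear combinations of atoms in an lmodType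
   by comparing the scalar coefficients of each atom. *)
Ltac lincomb R :=
  cbv beta;
  lazymatch goal with
  | |- @eq ?T ?A ?B =>
    let l := lexpr_atoms B ltac:(lexpr_atoms A (@nil T)) in
    let eA := lexpr_reify R A l in
    let eB := lexpr_reify R B l in
    change (leval (fun j => nth 0%R l j) eA = leval (fun j => nth 0%R l j) eB);
    apply: (@leval_eq R _ _ eA eB (size l)) => //;
    let j := fresh "j" in let hj := fresh "hj" in
    move=> j hj;
    repeat (first [ by rewrite !ltnS ltn0 in hj
                  | case: j hj => [_|j hj];
                      [by rewrite /=; first [ring | lra | nra | field] |] ])
  end.

Section FunctionalEquation.
Variables (R : realType) (X Y : normedModType R).
Implicit Types (F : X -> Y) (x y : X).

Lemma odd_fun0 F : odd_fun F -> F 0 = 0.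
Proof.
move=> hodd; have h : F 0 = - F 0 by rewrite -{1}oppr0 hodd.
have : (2 : R) *: F 0 = 0 by rewrite scaler_nat mulr2n {2}h subrr.
by move/eqP; rewrite scaler_eq0 pnatr_eq0 => /eqP.
Qed.

Lemma Dfun_hom F (k : R) : (forall z, F (2 *: z) = k *: F z) -> forall x y,
  Dfun F x y = 3 *: F (x + 3 *: y) - F (3 *: x + y) - 12 *: (F (x + y) + F (x - y))
               + (16 + 4 * k) *: F x + (16 - 12 * k) *: F y.
Proof. by move=> hk x y; rewrite /Dfun !hk; lincomb R. Qed.

Section Solutions.
Variables (F : X -> Y) (k : R).
Hypotheses (hodd : odd_fun F) (hhom : forall z, F (2 *: z) = k *: F z)
  (hD0 : forall x y, Dfun F x y = 0).

Lemma Dfun0_mul3_add x y :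
  F (3 *: x + y) = 6 *: F (x + y) - 3 *: F (x - y) + (4 * k - 8) *: F x - 8 *: F y.
Proof.
apply: (@scalerI _ _ 8); first by rewrite pnatr_eq0.
apply/eqP; rewrite -subr_eq0; apply/eqP.
transitivity (Dfun F x y + 3 *: Dfun F y x); last by rewrite !hD0 scaler0 addr0.
rewrite !(Dfun_hom hhom) (addrC y (3 *: x)) (addrC (3 *: y) x) (addrC y x) -(opprB x y) hodd.
lincomb R.
Qed.

Lemma Dfun0_third_diff x y :
  F (x + 2 *: y) - 3 *: F (x + y) + 3 *: F x - F (x - y) = (k - 2) *: F y.
Proof.
pose T x y := F (x + 2 *: y) - 3 *: F (x + y) + 3 *: F x - F (x - y) - (k - 2) *: F y.
have T_flip x' y' : T x' y' = 3 *: T x' (- y').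
  have := Dfun0_mul3_add y' (x' - y').
  have -> : 3 *: y' + (x' - y') = x' + 2 *: y' by lincomb R.
  have -> : y' + (x' - y') = x' by lincomb R.
  have -> : y' - (x' - y') = - (x' - 2 *: y') by lincomb R.
  by rewrite hodd /T (scalerN 2 y') opprK hodd => ->; lincomb R.
have T9 : T x y = (3 * 3) *: T x y by rewrite {1}T_flip T_flip opprK scalerA.
apply: subr0_eq; apply/eqP.
have : (3 * 3 - 1) *: T x y = 0 by rewrite scalerBl -T9 scale1r subrr.
rewrite (_ : 3 * 3 - 1 = 8); last lra.
by move/eqP; rewrite scaler_eq0 pnatr_eq0.
Qed.

End Solutions.

Lemma cubic_of_Dfun0 F : odd_fun F -> (forall z, F (2 *: z) = 8 *: F z) ->
  (forall x y, Dfun F x y = 0) -> cubic_fun F.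
Proof.
move=> hodd h8 hD0 x y; rewrite (Dfun0_third_diff hodd h8 hD0).
by congr (_ *: _); lra.
Qed.

Lemma additive_of_Dfun0 F : odd_fun F -> (forall z, F (2 *: z) = 2 *: F z) ->
  (forall x y, Dfun F x y = 0) -> additive_fun F.
Proof.
move=> hodd h2 hD0.
have T0 x y : F (x + 2 *: y) = 3 *: F (x + y) - 3 *: F x + F (x - y).
  have := Dfun0_third_diff hodd h2 hD0 x y; rewrite subrr scale0r.
  by move=> /subr0_eq <-; lincomb R.
have T0N x y : F (x - 2 *: y) = 3 *: F (x - y) - 3 *: F x + F (x + y).
  by rewrite -scalerN T0 opprK.
pose J a b := F (a + b) + F (a - b) - 2 *: F a.
have J_mul2r a b : J a (2 *: b) = 4 *: J a b by rewrite /J T0 T0N; lincomb R.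
have J_mul2l a b : J (2 *: a) b = 2 *: J a b.
  rewrite /J (addrC (2 *: a) b) -(opprB b (2 *: a)) hodd T0 T0N h2.
  rewrite -(opprB b a) hodd (addrC a b).
  lincomb R.
have J_mul2 a b : J (2 *: a) (2 *: b) = 2 *: J a b.
  by rewrite /J -scalerDr -scalerBr !h2; lincomb R.
have J0 a b : J a b = 0.
  have : (8 - 2) *: J a b = 0 by rewrite scalerBl -J_mul2 J_mul2l J_mul2r; lincomb R.
  rewrite (_ : 8 - 2 = 6); last lra.
  by move/eqP; rewrite scaler_eq0 pnatr_eq0 => /eqP.
move=> u v; have := J0 (u + v) (u - v); rewrite /J.
have -> : u + v + (u - v) = 2 *: u by lincomb R.
have -> : u + v - (u - v) = 2 *: v by lincomb R.
have two0 : (2 : R) != 0 by rewrite pnatr_eq0.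
by rewrite !h2 -scalerDr => /subr0_eq /(scalerI two0) ->.
Qed.

Lemma Dfun_diag F (a b : R) : odd_fun F -> a + b = 10 -> a * b = 16 -> forall w,
  Dfun F w w = 2 *: ((F (2 *: (2 *: w)) - a *: F (2 *: w)) - b *: (F (2 *: w) - a *: F w)).
Proof.
move=> hodd hab hab' w; rewrite /Dfun subrr (odd_fun0 hodd).
have -> : w + 3 *: w = 2 *: (2 *: w) by lincomb R.
have -> : 3 *: w + w = 2 *: (2 *: w) by lincomb R.
have -> : w + w = 2 *: w by lincomb R.
lincomb R.
Qed.

Lemma Dfun_scale F (k d : R) x y :
  Dfun (fun z => k *: F (d *: z)) x y = k *: Dfun F (d *: x) (d *: y).
Proof.
have sl (u v : X) e : d *: (u + e *: v) = d *: u + e *: (d *: v) by lincomb R.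
have sr (u v : X) e : d *: (e *: u + v) = e *: (d *: u) + d *: v by lincomb R.
have sc (u : X) e : d *: (e *: u) = e *: (d *: u) by lincomb R.
by rewrite /Dfun sl sr (scalerDr d x y) scalerBr !sc; lincomb R.
Qed.

Lemma Dfun_mul2_sub F (a : R) x y :
  Dfun (fun z => F (2 *: z) - a *: F z) x y = Dfun F (2 *: x) (2 *: y) - a *: Dfun F x y.
Proof.
have sl (u v : X) e : 2 *: (u + e *: v) = 2 *: u + e *: (2 *: v) by lincomb R.
have sr (u v : X) e : 2 *: (e *: u + v) = e *: (2 *: u) + 2 *: v by lincomb R.
by rewrite /Dfun sl sr (scalerDr 2 x y) (scalerBr 2 x y); lincomb R.
Qed.

Lemma additive_fun_mul2 (A : X -> Y) : additive_fun A -> forall z, A (2 *: z) = 2 *: A z.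
Proof. by move=> hA z; rewrite -[2]/(1 + 1) !scalerDl !scale1r hA. Qed.

Lemma cubic_fun0 (C : X -> Y) : cubic_fun C -> C 0 = 0.
Proof.
move=> hC; have := hC 0 0; rewrite scaler0 !addr0 subr0 => e.
have : 6 *: C 0 = 0 by rewrite -e; lincomb R.
by move/eqP; rewrite scaler_eq0 pnatr_eq0 => /eqP.
Qed.

Lemma cubic_fun_odd (C : X -> Y) : cubic_fun C -> odd_fun C.
Proof.
move=> hC y; have := hC (- y) y; have := hC 0 (- y).
have -> : - y + 2 *: y = y by lincomb R.
have -> : - y - y = - (2 *: y) by lincomb R.
rewrite addNr !add0r opprK scalerN !(cubic_fun0 hC) => e1 e2.
have : 6 *: (C (- y) + C y) = 0 by rewrite scalerDr -e1 -e2; lincomb R.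
by move/eqP; rewrite scaler_eq0 pnatr_eq0 addr_eq0 => /eqP.
Qed.

Lemma cubic_fun_mul2 (C : X -> Y) : cubic_fun C -> forall z, C (2 *: z) = 8 *: C z.
Proof.
move=> hC z; have := hC 0 z.
rewrite !add0r (cubic_fun_odd hC) (cubic_fun0 hC) => e.
by apply: subr0_eq; rewrite -(subrr (6 *: C z)) -{1}e; lincomb R.
Qed.

End FunctionalEquation.

Section Sequences.
Variables (R : realType) (Y : completeNormedModType R).

Lemma cvg0_of_norm_le (u : nat -> Y) (v : nat -> R) :
  (forall n, `|u n| <= v n) -> v @ \oo --> 0 -> u @ \oo --> 0.
Proof.
move=> huv hv; apply: norm_cvg0.
apply: (@squeeze_cvgr _ _ _ _ (fun=> 0) v) => //; last exact: cvg_cst.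
by apply: nearW => n; rewrite normr_ge0 huv.
Qed.

Variables (u : nat -> Y) (a : nat -> R).
Hypotheses (a_ge0 : forall n, 0 <= a n) (u_step : forall n, `|u n.+1 - u n| <= a n)
  (a_sum : (\sum_(0 <= i <oo) (a i)%:E < +oo)%E).

Let u_series n : u n = u 0%N + series (fun k => u k.+1 - u k) n.
Proof. by rewrite /series /= telescope_sumr // addrC subrK. Qed.

Lemma summable_steps_cvg : cvgn u.
Proof.
have /normed_cvg cd : cvgn [normed series (fun k => u k.+1 - u k)].
  apply: (series_le_cvg _ a_ge0 _ (nnseries_is_cvg a_ge0 a_sum)) => // n.
  exact: normr_ge0.
rewrite (_ : u = fun n => u 0%N + series (fun k => u k.+1 - u k) n).
  by apply: is_cvgD; [exact: is_cvg_cst | exact: cd].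
by apply/funext => n; rewrite -u_series.
Qed.

Lemma summable_steps_dist_lim :
  ((`|u 0%N - limn u|)%:E <= \sum_(0 <= i <oo) (a i)%:E)%E.
Proof.
have partial N : ((`|u 0%N - u N|)%:E <= \sum_(0 <= i <oo) (a i)%:E)%E.
  apply: le_trans (nneseries_lim_ge N _); last by move=> n _ _; rewrite lee_fin.
  rewrite sumEFin lee_fin distrC (u_series N) (addrC (u 0%N)) addrK.
  by apply: le_trans (ler_norm_sum _ _ _) _; apply: ler_sum => k _.
have S_ge0 : (0 <= \sum_(0 <= i <oo) (a i)%:E)%E.
  by apply: nneseries_ge0 => n _ _; rewrite lee_fin.
move: a_sum S_ge0 partial; case: (\sum_(0 <= i <oo) (a i)%:E)%E => // S _ _ partial.
rewrite lee_fin.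
have cl : (fun N => `|u 0%N - u N|) @ \oo --> `|u 0%N - limn u|.
  by apply: cvg_norm; apply: cvgB; [exact: cvg_cst | exact: summable_steps_cvg].
rewrite -(cvg_lim _ cl) //; apply: limr_le; first by apply/cvg_ex; exists (`|u 0%N - limn u|).
by apply: nearW => N; rewrite -lee_fin.
Qed.

End Sequences.

Section HyersSequence.
Variables (R : realType) (X : normedModType R) (Y : completeNormedModType R).
Variables (c t : R) (G : X -> Y).
Hypothesis c_ge0 : 0 <= c.

Definition hyers_seq (x : X) (n : nat) : Y := c ^+ n *: G ((t ^+ n)^-1 *: x).

Definition hyers_lim (x : X) : Y := limn (hyers_seq x).

Lemma hyers_seq0 x : hyers_seq x 0 = G x.
Proof. by rewrite /hyers_seq !expr0 invr1 !scale1r. Qed.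

Lemma hyers_seqS x n : hyers_seq x n.+1 = c *: hyers_seq (t^-1 *: x) n.
Proof. by rewrite /hyers_seq exprS exprSr invfM -!scalerA. Qed.

Lemma hyers_seq_step x n : hyers_seq x n.+1 - hyers_seq x n =
  c ^+ n *: (c *: G (t^-1 *: ((t ^+ n)^-1 *: x)) - G ((t ^+ n)^-1 *: x)).
Proof.
by rewrite /hyers_seq scalerBr !scalerA -exprSr -invfM -exprS.
Qed.

Section Limit.
Hypothesis seq_cvg : forall x, cvgn (hyers_seq x).

Lemma hyers_lim_scale x : c *: hyers_lim (t^-1 *: x) = hyers_lim x.
Proof.
apply/esym/cvg_lim => //; rewrite -cvg_shiftS.
under eq_fun => n do rewrite /= hyers_seqS.
by apply: cvgZ; [exact: cvg_cst | exact: seq_cvg].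
Qed.

Lemma hyers_lim_odd : odd_fun G -> odd_fun hyers_lim.
Proof.
move=> hodd x; apply: cvg_lim => //.
have -> : hyers_seq (- x) = - hyers_seq x.
  by apply/funext => n; rewrite /hyers_seq /= scalerN hodd scalerN.
by apply: cvgN; exact: seq_cvg.
Qed.

Lemma hyers_lim_Dfun0 :
  (forall a b, (c ^+ n *: Dfun G ((t ^+ n)^-1 *: a) ((t ^+ n)^-1 *: b)) @[n --> \oo] --> 0) ->
  forall a b, Dfun hyers_lim a b = 0.
Proof.
move=> hD0 a b.
have lim_D : (fun n => Dfun (hyers_seq^~ n) a b) @ \oo --> Dfun hyers_lim a b.
  rewrite /Dfun.
  by repeat first [exact: seq_cvg | apply: cvgD | apply: cvgN
                  | apply: cvgZ; first exact: cvg_cst].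
rewrite -(cvg_lim _ lim_D) //; apply: cvg_lim => //.
by under eq_fun => n do rewrite /hyers_seq Dfun_scale; exact: hD0.
Qed.
End Limit.

Section Approximation.
Variable psi : X -> R.
Hypotheses (psi_ge0 : forall x, 0 <= psi x)
  (G_approx : forall x, `|c *: G (t^-1 *: x) - G x| <= psi x)
  (psi_sum : forall x,
     (\sum_(0 <= n <oo) (c ^+ n * psi ((t ^+ n)^-1 *: x))%:E < +oo)%E).

Let hyers_step_le x n :
  `|hyers_seq x n.+1 - hyers_seq x n| <= c ^+ n * psi ((t ^+ n)^-1 *: x).
Proof.
by rewrite hyers_seq_step normrZ ger0_norm ?exprn_ge0 // ler_wpM2l ?exprn_ge0.
Qed.

Lemma hyers_cvg x : cvgn (hyers_seq x).
Proof.
by apply: summable_steps_cvg (hyers_step_le x) (psi_sum x) => n; rewrite mulr_ge0 ?exprn_ge0.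
Qed.

Lemma hyers_lim_dist x : ((`|G x - hyers_lim x|)%:E <=
  \sum_(0 <= n <oo) (c ^+ n * psi ((t ^+ n)^-1 *: x))%:E)%E.
Proof.
rewrite -{1}(hyers_seq0 x); apply: summable_steps_dist_lim (hyers_step_le x) (psi_sum x).
by move=> n; rewrite mulr_ge0 ?exprn_ge0.
Qed.

End Approximation.

Lemma hyers_lim_eq (M : X -> Y) : (forall x, c *: M (t^-1 *: x) = M x) ->
  (forall x, (c ^+ n * `|G ((t ^+ n)^-1 *: x) - M ((t ^+ n)^-1 *: x)|) @[n --> \oo] --> 0) ->
  forall x, hyers_lim x = M x.
Proof.
move=> M_fix GM0 x; apply: cvg_lim => //.
have M_seq n : c ^+ n *: M ((t ^+ n)^-1 *: x) = M x.
  elim: n => [|n IH]; first by rewrite !expr0 invr1 !scale1r.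
  by rewrite exprSr [t ^+ _]exprS invfM -!scalerA M_fix.
have -> : hyers_seq x =
    fun n => M x + c ^+ n *: (G ((t ^+ n)^-1 *: x) - M ((t ^+ n)^-1 *: x)).
  by apply/funext => n; rewrite scalerBr M_seq addrC subrK.
rewrite -{2}[M x]addr0; apply: cvgD; first exact: cvg_cst.
apply: cvg0_of_norm_le (GM0 x) => n.
by rewrite normrZ ger0_norm ?exprn_ge0.
Qed.

End HyersSequence.

Section SeriesTail.
Variable R : realType.
Local Open Scope ereal_scope.

Lemma fine_nneseriesK (u : nat -> R) : (forall n, (0 <= u n)%R) ->
  \sum_(0 <= n <oo) (u n)%:E < +oo ->
  (fine (\sum_(0 <= n <oo) (u n)%:E))%:E = \sum_(0 <= n <oo) (u n)%:E.
Proof.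
move=> u0 ufin; rewrite fineK // ge0_fin_numE //.
by apply: nneseries_ge0 => n _ _; rewrite lee_fin.
Qed.

Variables (X : normedModType R) (c t : R) (Q : X -> nat -> R).
Hypotheses (c_ge0 : (0 <= c)%R) (Q_ge0 : forall x n, (0 <= Q x n)%R)
  (Q_sum : forall x, \sum_(0 <= n <oo) (Q x n)%:E < +oo)
  (Q_shift : forall x m n, (c ^+ m * Q ((t ^+ m)^-1 *: x) n <= 2 * Q x (n + m))%R).

Lemma scaled_series_cvg0 x :
  (c ^+ m * fine (\sum_(0 <= n <oo) (Q ((t ^+ m)^-1 *: x) n)%:E))%R @[m --> \oo] --> 0%R.
Proof.
have Q2_ge0 k : 0 <= (2 * Q x k)%:E by rewrite lee_fin mulr_ge0.
have Q2_sum : \sum_(0 <= k <oo) (2 * Q x k)%:E < +oo.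
  rewrite (eq_eseriesr (fun k _ => EFinM 2 (Q x k))) nneseriesZl; last first.
    by move=> i _; rewrite lee_fin.
  by rewrite -(fine_nneseriesK (Q_ge0 x) (Q_sum x)) -EFinM ltry.
have tail0 : \sum_(m <= j <oo) (2 * Q x j)%:E @[m --> \oo] --> 0.
  exact: (@nneseries_tail_cvg R (fun j => (2 * Q x j)%:E) xpredT Q2_sum).
have le_tail m : (c ^+ m * fine (\sum_(0 <= n <oo) (Q ((t ^+ m)^-1 *: x) n)%:E))%:E
    <= \sum_(m <= j <oo) (2 * Q x j)%:E.
  rewrite EFinM (fine_nneseriesK (Q_ge0 _) (Q_sum _)) -nneseriesZl; last first.
    by move=> i _; rewrite lee_fin.
  rewrite -(nneseries_addn m Q2_ge0).
  apply: lee_nneseries => [i _ _|n _]; first by rewrite -EFinM lee_fin mulr_ge0 ?exprn_ge0.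
  by rewrite -EFinM lee_fin.
suff hE : (c ^+ m * fine (\sum_(0 <= n <oo) (Q ((t ^+ m)^-1 *: x) n)%:E))%:E
    @[m --> \oo] --> 0 by have [] := (fine_cvgP _ 0%R).1 hE.
apply: (squeeze_cvge _ (cvg_cst 0) tail0); apply: nearW => m.
rewrite le_tail andbT lee_fin mulr_ge0 ?exprn_ge0 // fine_ge0 //.
by apply: nneseries_ge0 => n _ _; rewrite lee_fin.
Qed.

End SeriesTail.

Lemma expr_mix_le (R : realType) (p q c : R) m j : 0 <= p -> 0 <= q -> (c = p \/ c = q) ->
  c ^+ m * (p ^+ j + q ^+ j) <= 2 * (p ^+ (j + m) + q ^+ (j + m)).
Proof.
move=> p0 q0 hc.
have [M [pM qM M_pq]] : exists M, [/\ p <= M, q <= M & M = p \/ M = q].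
  by have [pq|/ltW qp] := lerP p q; [exists q | exists p]; split; auto.
have cM : c <= M by case: hc => ->.
have c0 : 0 <= c by case: hc => ->.
have mix_le u : 0 <= u -> u <= M -> c ^+ m * u ^+ j <= M ^+ (j + m).
  move=> u0 uM; rewrite exprD mulrC.
  by apply: ler_pM; rewrite ?exprn_ge0 ?lerXn2r // nnegrE (le_trans u0).
have M_le : M ^+ (j + m) <= p ^+ (j + m) + q ^+ (j + m).
  by case: M_pq => ->; rewrite ?lerDl ?lerDr exprn_ge0.
rewrite mulrDr mulr2n mulrDl mul1r.
by apply: lerD; apply: le_trans M_le; apply: mix_le.
Qed.

Lemma scale_fixed_mul2 (R : realType) (X Y : normedModType R) (M : X -> Y) (t : R) p :
  t = 2 \/ t = 2^-1 ->
  (forall x, t ^+ p *: M (t^-1 *: x) = M x) <-> (forall z, M (2 *: z) = 2 ^+ p *: M z).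
Proof.
have two0 : (2 : R) != 0 by rewrite pnatr_eq0.
have half2 z : 2^-1 *: (2 *: z) = z :> X by rewrite scalerA mulVf ?scale1r.
have two_half x : 2 *: (2^-1 *: x) = x :> X by rewrite scalerA divff ?scale1r.
have halfK : (2^-1 : R) ^+ p * 2 ^+ p = 1 by rewrite exprVn mulVf ?expf_neq0.
case=> ->; split=> hM.
- by move=> z; rewrite -[in LHS]hM half2.
- by move=> x; rewrite -hM two_half.
- by move=> z; rewrite -[in RHS]hM invrK scalerA mulrC halfK scale1r.
- by move=> x; rewrite invrK hM scalerA halfK scale1r.
Qed.

Section Stability.
Variables (R : realType) (X : normedModType R) (Y : completeNormedModType R).
Variables (f : X -> Y) (phi : X -> X -> R) (t tau : R) (s : nat).
Hypotheses (hts : (t = 2 /\ s = 0%N /\ tau = 2) \/ (t = 2^-1 /\ s = 1%N /\ tau = 1))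
  (f_odd : odd_fun f) (phi_ge0 : forall x y, 0 <= phi x y)
  (f_approx : forall x y, `|Dfun f x y| <= phi x y).

(* The cases l = 1 and l = -1: t = 2^l, the bound series starts at index
   s = (1 - l)/2, and tau = 2^(l(s+l)). *)
Let rho x := phi (tau^-1 *: x) (tau^-1 *: x).
Let Q x n := (t ^+ (n + s) + (t ^+ 3) ^+ (n + s)) * rho ((t ^+ n)^-1 *: x).

Hypotheses (Q_sum : forall x, (\sum_(0 <= n <oo) (Q x n)%:E < +oo)%E)
  (phi_vanish1 : forall x y,
     (t ^+ n * phi ((t ^+ n)^-1 *: x) ((t ^+ n)^-1 *: y)) @[n --> \oo] --> 0)
  (phi_vanish3 : forall x y,
     ((t ^+ 3) ^+ n * phi ((t ^+ n)^-1 *: x) ((t ^+ n)^-1 *: y)) @[n --> \oo] --> 0).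

Let t_cases : t = 2 \/ t = 2^-1.
Proof. by case: hts => [[-> _]|[-> _]]; [left|right]. Qed.

Let t_ge0 : 0 <= t.
Proof. by case: t_cases => ->; rewrite ?invr_ge0 ler0n. Qed.

Let Q_ge0 x n : 0 <= Q x n.
Proof. by apply: mulr_ge0; [rewrite addr_ge0 ?exprn_ge0 | apply: phi_ge0]. Qed.

Let Q_shift (c : R) : c = t \/ c = t ^+ 3 ->
  forall x m n, c ^+ m * Q ((t ^+ m)^-1 *: x) n <= 2 * Q x (n + m).
Proof.
move=> hc x m n; rewrite /Q scalerA -invfM -exprD !mulrA addnAC.
apply: ler_wpM2r; first exact: phi_ge0.
by apply: expr_mix_le; rewrite ?exprn_ge0.
Qed.

(* [G] is approximately 2^p-homogeneous: (p, a) = (1, 8) yields the additive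
   part and (p, a) = (3, 2) the cubic part. *)
Section Component.
Variables (a : R) (p : nat).
Hypothesis hap : (p = 1%N /\ a = 8) \/ (p = 3%N /\ a = 2).

Let G z := f (2 *: z) - a *: f z.
Let c := t ^+ p.
Let L := hyers_lim c t G.

Let two0 : (2 : R) != 0.
Proof. by rewrite pnatr_eq0. Qed.

Let c_ge0 : 0 <= c.
Proof. exact: exprn_ge0. Qed.

Let c_cases : c = t \/ c = t ^+ 3.
Proof. by rewrite /c; case: hap => [[-> _]|[-> _]]; [left|right]. Qed.

Let G_approx x : `|c *: G (t^-1 *: x) - G x| <= 2^-1 * (c ^+ s * rho x).
Proof.
have diag w : Dfun f w w = 2 *: (G (2 *: w) - 2 ^+ p *: G w).
  by apply: Dfun_diag => //; case: hap => [[-> ->]|[-> ->]]; lra.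
rewrite /rho; case: hts => [[ht [-> ->]]|[ht [-> ->]]].
- rewrite /c ht expr0 mul1r -{2}(scalerKV two0 x); set w := 2^-1 *: x.
  have -> : 2 ^+ p *: G w - G (2 *: w) = - 2^-1 *: Dfun f w w by rewrite diag; lincomb R.
  by rewrite normrZ normrN ger0_norm ?invr_ge0 // ler_wpM2l ?invr_ge0.
- rewrite /c ht expr1 invrK invr1 !scale1r.
  have -> : (2^-1) ^+ p *: G (2 *: x) - G x = ((2^-1) ^+ p / 2) *: Dfun f x x.
    by rewrite diag; case: hap => [[-> _]|[-> _]]; lincomb R.
  rewrite normrZ ger0_norm ?divr_ge0 ?exprn_ge0 ?invr_ge0 // (mulrC _ 2^-1) -mulrA.
  by rewrite ler_wpM2l ?invr_ge0 // ler_wpM2l ?exprn_ge0 ?invr_ge0.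
Qed.

Let psi x := 2^-1 * (c ^+ s * rho x).

Let psi_ge0 x : 0 <= psi x.
Proof. by rewrite mulr_ge0 ?invr_ge0 ?mulr_ge0 ?exprn_ge0 //; apply: phi_ge0. Qed.

Let psi_term x n :
  c ^+ n * psi ((t ^+ n)^-1 *: x) = 2^-1 * (c ^+ (n + s) * rho ((t ^+ n)^-1 *: x)).
Proof. by rewrite /psi mulrCA (mulrA (c ^+ n)) -exprD. Qed.

Let psi_sum x :
  (\sum_(0 <= n <oo) (c ^+ n * psi ((t ^+ n)^-1 *: x))%:E < +oo)%E.
Proof.
apply: le_lt_trans (Q_sum x); apply: lee_nneseries => [n _ _|n _]; rewrite lee_fin.
  by rewrite mulr_ge0 ?exprn_ge0.
have rho_ge0 : 0 <= rho ((t ^+ n)^-1 *: x) by apply: phi_ge0.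
rewrite psi_term (@le_trans _ _ (c ^+ (n + s) * rho ((t ^+ n)^-1 *: x))) //.
  by rewrite ler_piMl ?mulr_ge0 ?exprn_ge0 ?invf_le1 ?ler1n.
rewrite /Q ler_wpM2r //.
by case: c_cases => ->; rewrite ?lerDl ?lerDr exprn_ge0 ?exprn_ge0.
Qed.

Let L_cvg x : cvgn (hyers_seq c t G x).
Proof. exact: (@hyers_cvg _ _ _ c t G c_ge0 psi psi_ge0 G_approx psi_sum x). Qed.

Lemma component_lim_dist x : ((`|G x - L x|)%:E <=
  \sum_(0 <= n <oo) (2^-1 * (c ^+ (n + s) * rho ((t ^+ n)^-1 *: x)))%:E)%E.
Proof.
rewrite -(eq_eseriesr (fun n _ => congr1 EFin (psi_term x n))).
exact: (@hyers_lim_dist _ _ _ c t G c_ge0 psi psi_ge0 G_approx psi_sum x).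
Qed.

Lemma component_lim_mul2 z : L (2 *: z) = 2 ^+ p *: L z.
Proof.
move: z; apply/(scale_fixed_mul2 _ _ t_cases) => x.
exact: hyers_lim_scale L_cvg x.
Qed.

Lemma component_lim_odd : odd_fun L.
Proof.
apply: hyers_lim_odd L_cvg _ => z.
by rewrite /G scalerN !f_odd; lincomb R.
Qed.

Let phi_vanish x y :
  (c ^+ n * phi ((t ^+ n)^-1 *: x) ((t ^+ n)^-1 *: y)) @[n --> \oo] --> 0.
Proof.
by rewrite /c; case: hap => [[-> _]|[-> _]]; [exact: phi_vanish1 | exact: phi_vanish3].
Qed.

Lemma component_lim_Dfun0 x y : Dfun L x y = 0.
Proof.
apply: hyers_lim_Dfun0 L_cvg _ x y => u v.
pose bound n := c ^+ n * phi ((t ^+ n)^-1 *: (2 *: u)) ((t ^+ n)^-1 *: (2 *: v))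
  + `|a| * (c ^+ n * phi ((t ^+ n)^-1 *: u) ((t ^+ n)^-1 *: v)).
apply: (cvg0_of_norm_le (v := bound)) => [n|].
  have sc w : 2 *: ((t ^+ n)^-1 *: w) = (t ^+ n)^-1 *: (2 *: w) by rewrite !scalerA mulrC.
  rewrite Dfun_mul2_sub normrZ ger0_norm ?exprn_ge0 // !sc /bound mulrCA -mulrDr.
  rewrite ler_wpM2l ?exprn_ge0 // (le_trans (ler_normB _ _)) // normrZ.
  by rewrite lerD ?ler_wpM2l.
rewrite -[0](addr0 0); apply: cvgD; first exact: phi_vanish.
by rewrite -(mulr0 `|a|); apply: cvgMl_tmp; exact: phi_vanish.
Qed.

Lemma component_lim_unique (A C : X -> Y) : additive_fun A -> cubic_fun C ->
  (forall x, ((`|f x - A x - C x|)%:E <= (12^-1)%:E * \sum_(0 <= n <oo) (Q x n)%:E)%E) ->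
  forall x, L x = (2 - a) *: A x + (8 - a) *: C x.
Proof.
move=> hA hC hbound; have A2 := additive_fun_mul2 hA; have C2 := cubic_fun_mul2 hC.
pose E z := f z - A z - C z.
pose S z := fine (\sum_(0 <= n <oo) (Q z n)%:E).
have E_le z : `|E z| <= 12^-1 * S z.
  by rewrite -lee_fin EFinM /S fine_nneseriesK //; apply: hbound.
apply: (@hyers_lim_eq _ _ _ c t G c_ge0 (fun x => (2 - a) *: A x + (8 - a) *: C x)) => [|x].
  apply/(scale_fixed_mul2 _ _ t_cases) => z; rewrite A2 C2.
  by case: hap => [[-> ->]|[-> ->]]; lincomb R.
have S_cvg0 z : (c ^+ n * S ((t ^+ n)^-1 *: z)) @[n --> \oo] --> 0.
  exact: scaled_series_cvg0 c_ge0 Q_ge0 Q_sum (Q_shift c_cases) z.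
pose bound n := 12^-1 * (c ^+ n * S ((t ^+ n)^-1 *: (2 *: x)))
  + (`|a| * 12^-1) * (c ^+ n * S ((t ^+ n)^-1 *: x)).
apply: (cvg0_of_norm_le (v := bound)) => [n|].
  set y := (t ^+ n)^-1 *: x.
  have -> : G y - ((2 - a) *: A y + (8 - a) *: C y) = E (2 *: y) - a *: E y.
    by rewrite /G /E A2 C2; lincomb R.
  have -> : 2 *: y = (t ^+ n)^-1 *: (2 *: x) by rewrite /y !scalerA mulrC.
  rewrite normrM !ger0_norm ?exprn_ge0 // /bound mulrCA (mulrCA (_ * _)) -mulrDr.
  rewrite ler_wpM2l ?exprn_ge0 // (le_trans (ler_normB _ _)) // normrZ -mulrA.
  by rewrite lerD ?ler_wpM2l.
rewrite -[0](addr0 0); apply: cvgD.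
  by rewrite -(mulr0 12^-1); apply: cvgMl_tmp; exact: S_cvg0.
by rewrite -(mulr0 (`|a| * 12^-1)); apply: cvgMl_tmp; exact: S_cvg0.
Qed.

End Component.

Let bound (A C : X -> Y) := forall x,
  ((`|f x - A x - C x|)%:E <= (12^-1)%:E * \sum_(0 <= n <oo) (Q x n)%:E)%E.

Let additive_part : (1%N = 1%N /\ (8 : R) = 8) \/ (1%N = 3%N /\ (8 : R) = 2).
Proof. by left. Qed.
Let cubic_part : (3%N = 1%N /\ (2 : R) = 8) \/ (3%N = 3%N /\ (2 : R) = 2).
Proof. by right. Qed.

Let LA := hyers_lim (t ^+ 1) t (fun z => f (2 *: z) - 8 *: f z).
Let LC := hyers_lim (t ^+ 3) t (fun z => f (2 *: z) - 2 *: f z).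

Let LA_additive : additive_fun LA.
Proof.
apply: additive_of_Dfun0; first exact: component_lim_odd additive_part.
  by move=> z; rewrite /LA (component_lim_mul2 additive_part) expr1.
exact: component_lim_Dfun0 additive_part.
Qed.

Let LC_cubic : cubic_fun LC.
Proof.
apply: cubic_of_Dfun0; first exact: component_lim_odd cubic_part.
  by move=> z; rewrite /LC (component_lim_mul2 cubic_part); congr (_ *: _); ring.
exact: component_lim_Dfun0 cubic_part.
Qed.

(* [f = (h - g) / 6] for [g = f(2.) - 8 f] and [h = f(2.) - 2 f]. *)
Let components_bound : bound (fun x => - 6^-1 *: LA x) (fun x => 6^-1 *: LC x).
Proof.
move=> x; have dA := component_lim_dist additive_part x.
have dC := component_lim_dist cubic_part x.
have -> : f x - - 6^-1 *: LA x - 6^-1 *: LC x =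
    6^-1 *: ((f (2 *: x) - 2 *: f x - LC x) - (f (2 *: x) - 8 *: f x - LA x)) by lincomb R.
rewrite normrZ ger0_norm ?invr_ge0 // EFinM.
apply: (@le_trans _ _ ((6^-1)%:E * ((`|f (2 *: x) - 2 *: f x - LC x|)%:E
                                   + (`|f (2 *: x) - 8 *: f x - LA x|)%:E)))%E.
  by rewrite lee_wpmul2l ?lee_fin ?invr_ge0 // ler_normB.
apply: le_trans (lee_wpmul2l _ (leeD dC dA)) _; first by rewrite lee_fin invr_ge0.
have term_ge0 (q : R) n : 0 <= q -> 0 <= 2^-1 * (q ^+ (n + s) * rho ((t ^+ n)^-1 *: x)).
  by move=> q0; rewrite !mulr_ge0 ?invr_ge0 ?exprn_ge0 //; apply: phi_ge0.
rewrite -nneseriesD => [|n _ _|n _ _]; last 2 first.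
- by rewrite lee_fin term_ge0 ?exprn_ge0.
- by rewrite lee_fin term_ge0 ?exprn_ge0.
rewrite -nneseriesZl; last by move=> n _; rewrite adde_ge0 // lee_fin term_ge0 ?exprn_ge0.
rewrite -nneseriesZl; last by move=> n _; rewrite lee_fin Q_ge0.
apply: lee_nneseries => [n _ _|n _].
  by rewrite mule_ge0 ?lee_fin ?invr_ge0 ?addr_ge0 ?term_ge0 ?exprn_ge0.
rewrite -EFinD -!EFinM /Q expr1 lee_fin le_eqVlt; apply/orP; left; apply/eqP.
by field.
Qed.

Theorem additive_cubic_stability : exists A C : X -> Y,
  [/\ additive_fun A, cubic_fun C, bound A C &
    forall A' C', additive_fun A' -> cubic_fun C' -> bound A' C' -> A' = A /\ C' = C].
Proof.
exists (fun x => - 6^-1 *: LA x), (fun x => 6^-1 *: LC x); split => //.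
- by move=> x y; rewrite LA_additive scalerDr.
- move=> x y.
  transitivity (6^-1 *: (LC (x + 2 *: y) - 3 *: LC (x + y) + 3 *: LC x - LC (x - y))).
    by lincomb R.
  by rewrite LC_cubic; lincomb R.
- move=> A' C' hA' hC' hb; split; apply/funext => x.
    by rewrite /LA (component_lim_unique additive_part hA' hC' hb); lincomb R.
  by rewrite /LC (component_lim_unique cubic_part hA' hC' hb); lincomb R.
Qed.

End Stability.

Section IntegerExponents.
Variables (R : realType) (X : normedModType R) (phi : X -> X -> R) (l : int).

Lemma exprz_mulnl (x : R) (i : nat) : x ^ (i%:Z * l) = (x ^ l) ^+ i.
Proof. by rewrite mulrC -exprz_exp. Qed.

Lemma exprz8 : (8 : R) ^ l = ((2 : R) ^ l) ^+ 3.
Proof. by rewrite exprnP exprz_exp mulrC -exprz_exp -exprnP; congr (_ ^ _); ring. Qed.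

Lemma summable_natpow (k : R) x :
  (\sum_(1 <= i <oo) (k ^ (i%:Z * l) *
     phi ((2 ^ (i%:Z * l))^-1 *: x) ((2 ^ (i%:Z * l))^-1 *: x))%:E < +oo)%E ->
  (\sum_(1 <= i <oo) ((k ^ l) ^+ i *
     phi (((2 ^ l) ^+ i)^-1 *: x) (((2 ^ l) ^+ i)^-1 *: x))%:E < +oo)%E.
Proof. by move=> h; under eq_eseriesr do rewrite -!exprz_mulnl. Qed.

Lemma vanish_natpow (k : R) x y :
  (k ^ (n%:Z * l) * phi ((2 ^ (n%:Z * l))^-1 *: x) ((2 ^ (n%:Z * l))^-1 *: y))
    @[n --> \oo] --> 0 ->
  ((k ^ l) ^+ n * phi (((2 ^ l) ^+ n)^-1 *: x) (((2 ^ l) ^+ n)^-1 *: y))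
    @[n --> \oo] --> 0.
Proof. by move=> h; under eq_fun do rewrite -!exprz_mulnl. Qed.

Lemma bound_series_eq (s : nat) x : (forall x y, 0 <= phi x y) ->
  (\sum_(s <= i <oo) (((2 : R) ^ (i%:Z * l) + (8 : R) ^ (i%:Z * l)) *
      phi ((2 ^ (l * (i%:Z + l)))^-1 *: x) ((2 ^ (l * (i%:Z + l)))^-1 *: x))%:E =
   \sum_(0 <= n <oo) (((2 ^ l) ^+ (n + s) + ((2 ^ l) ^+ 3) ^+ (n + s)) *
      phi ((2 ^ (l * (s%:Z + l)))^-1 *: (((2 ^ l) ^+ n)^-1 *: x))
          ((2 ^ (l * (s%:Z + l)))^-1 *: (((2 ^ l) ^+ n)^-1 *: x)))%:E)%E.
Proof.
move=> phi_ge0; rewrite -nneseries_addn => [|i]; last first.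
  by rewrite lee_fin mulr_ge0 ?addr_ge0 ?exprz_ge0.
apply: eq_eseriesr => n _.
have -> : ((2 : R) ^ (l * ((n + s)%N%:Z + l)))^-1 *: x =
    (2 ^ (l * (s%:Z + l)))^-1 *: (((2 ^ l) ^+ n)^-1 *: x).
  rewrite scalerA -invfM -exprz_mulnl -exprzDr ?unitfE ?pnatr_eq0 //.
  by congr ((_ ^ _)^-1 *: _); rewrite PoszD; ring.
by rewrite !exprz_mulnl exprz8.
Qed.

Lemma exponent_cases : l = 1 \/ l = -1 ->
  ((2 : R) ^ l = 2 /\ (`|l - 1|%N %/ 2)%N = 0%N /\
     (2 : R) ^ (l * ((`|l - 1|%N %/ 2)%N%:Z + l)) = 2) \/
  ((2 : R) ^ l = 2^-1 /\ (`|l - 1|%N %/ 2)%N = 1%N /\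
     (2 : R) ^ (l * ((`|l - 1|%N %/ 2)%N%:Z + l)) = 1).
Proof. by case=> ->; [left | right]; rewrite /= ?expr1z ?exprN1 ?expr0z; repeat split. Qed.

End IntegerExponents.

Section ShiftedSeries.
Variables (R : realType) (X : normedModType R) (phi : X -> X -> R) (t tau : R) (s : nat).
Hypotheses (hts : (t = 2 /\ s = 0%N /\ tau = 2) \/ (t = 2^-1 /\ s = 1%N /\ tau = 1))
  (phi_ge0 : forall x y, 0 <= phi x y).

Local Open Scope ereal_scope.

Lemma shifted_series_fin (q : R) x : (0 < q)%R ->
  \sum_(1 <= i <oo) (q ^+ i * phi ((t ^+ i)^-1 *: x) ((t ^+ i)^-1 *: x))%:E < +oo ->
  \sum_(0 <= n <oo) (q ^+ (n + s) *
     phi (tau^-1 *: ((t ^+ n)^-1 *: x)) (tau^-1 *: ((t ^+ n)^-1 *: x)))%:E < +oo.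
Proof.
move=> q_gt0.
have a_ge0 (u : R) i : 0 <= (q ^+ i * phi (u *: x) (u *: x))%:E.
  by rewrite lee_fin mulr_ge0 ?exprn_ge0 ?phi_ge0 // ltW.
case: hts => [[-> [-> ->]]|[-> [-> ->]]] hsum.
- rewrite (eq_eseriesr (fun n _ => (_ : _ = (q^-1)%:E *
      (q ^+ n.+1 * phi ((2 ^+ n.+1)^-1 *: x) ((2 ^+ n.+1)^-1 *: x))%:E))); last first.
    move=> n _; rewrite -EFinM addn0 mulrA exprS mulKf ?gt_eqF //.
    by rewrite scalerA -invfM -exprS.
  rewrite nneseriesZl; last by move=> n _; apply: a_ge0.
  under eq_eseriesr do rewrite -addn1.
  rewrite (nneseries_addn 1 (fun i => a_ge0 (2 ^+ i)^-1%R i)).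
  by apply: lte_mul_pinfty; rewrite ?lee_fin ?invr_ge0 ?ltW.
- rewrite (eq_eseriesr (fun n _ => (_ : _ = q%:E *
      (q ^+ n * phi (((2^-1) ^+ n)^-1 *: x) (((2^-1) ^+ n)^-1 *: x))%:E))); last first.
    by move=> n _; rewrite -EFinM invr1 scale1r addn1 exprS mulrA.
  rewrite nneseriesZl; last by move=> n _; apply: a_ge0.
  rewrite nneseries_recl => [|n _|//]; last exact: a_ge0.
  by apply: lte_mul_pinfty; rewrite ?lee_fin ?ltW // lte_add_pinfty ?ltry.
Qed.

Lemma bound_series_fin x :
  \sum_(1 <= i <oo) (t ^+ i * phi ((t ^+ i)^-1 *: x) ((t ^+ i)^-1 *: x))%:E < +oo ->
  \sum_(1 <= i <oo) ((t ^+ 3) ^+ i * phi ((t ^+ i)^-1 *: x) ((t ^+ i)^-1 *: x))%:E < +oo ->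
  \sum_(0 <= n <oo) ((t ^+ (n + s) + (t ^+ 3) ^+ (n + s)) *
     phi (tau^-1 *: ((t ^+ n)^-1 *: x)) (tau^-1 *: ((t ^+ n)^-1 *: x)))%:E < +oo.
Proof.
move=> sum1 sum3.
have t_gt0 : (0 < t)%R by case: hts => [[-> _]|[-> _]]; rewrite ?invr_gt0 ltr0n.
under eq_eseriesr do rewrite mulrDl EFinD.
rewrite nneseriesD => [|n _ _|n _ _]; last 2 first.
- by rewrite lee_fin mulr_ge0 ?exprn_ge0 ?phi_ge0 // ltW.
- by rewrite lee_fin mulr_ge0 ?exprn_ge0 ?phi_ge0 // ltW.
by apply: lte_add_pinfty; apply: shifted_series_fin; rewrite ?exprn_gt0.
Qed.

End ShiftedSeries.

Theorem theorem3p3 (R : realType) (X : normedModType R)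
  (Y : completeNormedModType R) (l : int) (f : X -> Y) (phi : X -> X -> R) :
  (l = 1 \/ l = -1) ->
  odd_fun f ->
  (forall x y, 0 <= phi x y) ->
  (forall x y, `|Dfun f x y| <= phi x y) ->
  (forall x : X, (\sum_(1 <= i <oo)
      ((2 : R) ^ (i%:Z * l) * phi ((2 ^ (i%:Z * l))^-1 *: x) ((2 ^ (i%:Z * l))^-1 *: x))%:E
      < +oo)%E) ->
  (forall x : X, (\sum_(1 <= i <oo)
      ((8 : R) ^ (i%:Z * l) * phi ((2 ^ (i%:Z * l))^-1 *: x) ((2 ^ (i%:Z * l))^-1 *: x))%:E
      < +oo)%E) ->
  (forall x y : X, ((2 : R) ^ (n%:Z * l) * phi ((2 ^ (n%:Z * l))^-1 *: x)
                      ((2 ^ (n%:Z * l))^-1 *: y)) @[n --> \oo] --> 0) ->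
  (forall x y : X, ((8 : R) ^ (n%:Z * l) * phi ((2 ^ (n%:Z * l))^-1 *: x)
                      ((2 ^ (n%:Z * l))^-1 *: y)) @[n --> \oo] --> 0) ->
  let bound (A C : X -> Y) := forall x : X,
    ((`|f x - A x - C x|)%:E <= (12%:R^-1 : R)%:E *
      \sum_((`|l - 1|%N %/ 2)%N <= i <oo)
        (((2 : R) ^ (i%:Z * l) + (8 : R) ^ (i%:Z * l)) *
          phi ((2 ^ (l * (i%:Z + l)))^-1 *: x) ((2 ^ (l * (i%:Z + l)))^-1 *: x))%:E)%E in
  exists A C : X -> Y,
    [/\ additive_fun A, cubic_fun C, bound A C &
      forall A' C' : X -> Y, additive_fun A' -> cubic_fun C' -> bound A' C' ->
        A' = A /\ C' = C].
Proof.
move=> hl f_odd phi_ge0 f_approx sum2 sum8 van2 van8 bound.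
have hts := exponent_cases R hl.
have S2 x := summable_natpow (sum2 x); have S8 x := summable_natpow (sum8 x).
have V2 x y := vanish_natpow (van2 x y); have V8 x y := vanish_natpow (van8 x y).
rewrite exprz8 in S8 V8.
have [A [C [hA hC hAC huniq]]] := additive_cubic_stability hts f_odd phi_ge0 f_approx
  (fun x => bound_series_fin hts phi_ge0 (S2 x) (S8 x)) V2 V8.
exists A, C; split=> // [x|A' C' hA' hC' hAC'].
  by rewrite bound_series_eq //; exact: hAC.
by apply: huniq => // x; rewrite -bound_series_eq //; exact: hAC'.
Qed.
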